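(* For any compilation chain for partial programs and any trace relation ${\sim}\subseteq\mathit{Trace}_S\times\mathit{Trace}_T$ with existential and universal images $\tilde\tau,\tilde\sigma$, the following are equivalent: (i) $\mathit{RTP}^{\tilde\tau}$: for every source partial program $P$ and every $\pi_S\subseteq\mathit{Trace}_S$, $P\models_R\pi_S$ implies $P{\downarrow}\models_R\tilde\tau(\pi_S)$; (ii) $\mathit{RTC}^{\sim}$: for every $P$, every target context $C_T$ and every $t$, if $C_T[P{\downarrow}]\rightsquigarrow t$ then there exist a source context $C_S$ and $s\sim t$ with $C_S[P]\rightsquigarrow s$; (iii) $\mathit{RTP}^{\tilde\sigma}$: for every $P$ and every $\pi_T\subseteq\mathit{Trace}_T$, $P\models_R\tilde\sigma(\pi_T)$ implies $P{\downarrow}\models_R\pi_T$.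
   Context: A compilation chain for partial programs consists of source partial programs $P$ and source contexts $C_S$, target partial programs and target contexts $C_T$, linking operations $C[P]$ producing whole programs at each level, sets $\mathit{Trace}_S,\mathit{Trace}_T$ of traces, semantics relations $W\rightsquigarrow t$ (whole program $W$ can produce $t$), and a compiler mapping $P$ to a target partial program $P{\downarrow}$. $P\models_R\pi$ ($P$ robustly satisfies the trace property $\pi$) iff for every context $C$ at the same level and every trace $t$, $C[P]\rightsquigarrow t$ implies $t\in\pi$. The existential image of $\sim$ is $\tilde\tau(\pi)=\{t\mid\exists s.\ s\sim t\wedge s\in\pi\}$ and its universal image is $\tilde\sigma(\pi)=\{s\mid\forall t.\ s\sim t\Rightarrow t\in\pi\}$. *)

Record compilation_chain := {
  ProgS : Type;  CtxS : Type;  WholeS : Type;  TraceS : Type;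
  ProgT : Type;  CtxT : Type;  WholeT : Type;  TraceT : Type;
  plugS : CtxS -> ProgS -> WholeS;
  plugT : CtxT -> ProgT -> WholeT;
  semS : WholeS -> TraceS -> Prop;
  semT : WholeT -> TraceT -> Prop;
  compile : ProgS -> ProgT
}.

Section Chain.
Variable CC : compilation_chain.

Definition rsatS (P : ProgS CC) (pi : TraceS CC -> Prop) : Prop :=
  forall (C : CtxS CC) (t : TraceS CC), semS CC (plugS CC C P) t -> pi t.

Definition rsatT (P : ProgT CC) (pi : TraceT CC -> Prop) : Prop :=
  forall (C : CtxT CC) (t : TraceT CC), semT CC (plugT CC C P) t -> pi t.

Variable rel : TraceS CC -> TraceT CC -> Prop.

Definition tau_img (pi : TraceS CC -> Prop) : TraceT CC -> Prop :=
  fun t => exists s, rel s t /\ pi s.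

Definition sigma_img (pi : TraceT CC -> Prop) : TraceS CC -> Prop :=
  fun s => forall t, rel s t -> pi t.

Definition RTP_tau : Prop :=
  forall (P : ProgS CC) (piS : TraceS CC -> Prop),
    rsatS P piS -> rsatT (compile CC P) (tau_img piS).

Definition RTC : Prop :=
  forall (P : ProgS CC) (CT : CtxT CC) (t : TraceT CC),
    semT CC (plugT CC CT (compile CC P)) t ->
    exists (CS : CtxS CC) (s : TraceS CC), rel s t /\ semS CC (plugS CC CS P) s.

Definition RTP_sigma : Prop :=
  forall (P : ProgS CC) (piT : TraceT CC -> Prop),
    rsatS P (sigma_img piT) -> rsatT (compile CC P) piT.

End Chain.

(** The source behaviours of P, i.e. the traces of C_S[P] over all source
    contexts C_S, form the strongest property that P robustly satisfies, and
    RTC says exactly that P↓ robustly satisfies their existential image.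
    RTP^τ~ for an arbitrary π_S then follows by monotonicity of τ~, and
    RTP^σ~ from the Galois connection τ~(π_S) ⊆ π_T <-> π_S ⊆ σ~(π_T);
    conversely, instantiating π_S with the behaviours of P, resp. π_T with
    their τ~-image, gives back RTC. *)

From Stdlib Require Import Setoid.

Section RobustTraceCriteria.

Variable CC : compilation_chain.
Variable rel : TraceS CC -> TraceT CC -> Prop.

Definition behavS (P : ProgS CC) : TraceS CC -> Prop :=
  fun s => exists CS, semS CC (plugS CC CS P) s.

Lemma rsatS_behavS (P : ProgS CC) : rsatS CC P (behavS P).
Proof. intros CS s Hs. exists CS. exact Hs. Qed.

Lemma rsatS_iff_behavS_sub (P : ProgS CC) (pi : TraceS CC -> Prop) :
  rsatS CC P pi <-> (forall s, behavS P s -> pi s).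
Proof.
  split.
  - intros Hsat s [CS Hs]. exact (Hsat CS s Hs).
  - intros Hsub CS s Hs. apply Hsub. exists CS. exact Hs.
Qed.

Lemma rsatT_weaken (Q : ProgT CC) (pi pi' : TraceT CC -> Prop) :
  (forall t, pi t -> pi' t) -> rsatT CC Q pi -> rsatT CC Q pi'.
Proof. intros Hsub Hsat CT t Ht. exact (Hsub t (Hsat CT t Ht)). Qed.

Lemma tau_img_mono (pi pi' : TraceS CC -> Prop) :
  (forall s, pi s -> pi' s) -> forall t, tau_img CC rel pi t -> tau_img CC rel pi' t.
Proof. intros Hsub t [s [Hr Hs]]. exists s. split; [exact Hr | exact (Hsub s Hs)]. Qed.

Lemma tau_img_sub_iff_sub_sigma_img (piS : TraceS CC -> Prop) (piT : TraceT CC -> Prop) :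
  (forall t, tau_img CC rel piS t -> piT t) <->
  (forall s, piS s -> sigma_img CC rel piT s).
Proof.
  split.
  - intros Htau s Hs t Hr. apply Htau. exists s. split; assumption.
  - intros Hsigma t [s [Hr Hs]]. exact (Hsigma s Hs t Hr).
Qed.

Lemma RTC_iff_rsatT_tau_behavS :
  RTC CC rel <-> forall P, rsatT CC (compile CC P) (tau_img CC rel (behavS P)).
Proof.
  split.
  - intros Hrtc P CT t Ht.
    destruct (Hrtc P CT t Ht) as [CS [s [Hr Hs]]].
    exists s. split; [exact Hr | exists CS; exact Hs].
  - intros Hsat P CT t Ht.
    destruct (Hsat P CT t Ht) as [s [Hr [CS Hs]]].
    exists CS, s. split; assumption.
Qed.

Lemma RTP_tau_iff_RTC : RTP_tau CC rel <-> RTC CC rel.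
Proof.
  rewrite RTC_iff_rsatT_tau_behavS.
  split.
  - intros Hrtp P. exact (Hrtp P (behavS P) (rsatS_behavS P)).
  - intros Hrtc P piS HsatS.
    apply rsatT_weaken with (pi := tau_img CC rel (behavS P)); [|exact (Hrtc P)].
    apply tau_img_mono, rsatS_iff_behavS_sub, HsatS.
Qed.

Lemma RTC_iff_RTP_sigma : RTC CC rel <-> RTP_sigma CC rel.
Proof.
  rewrite RTC_iff_rsatT_tau_behavS.
  split.
  - intros Hrtc P piT HsatS.
    apply rsatT_weaken with (pi := tau_img CC rel (behavS P)); [|exact (Hrtc P)].
    apply tau_img_sub_iff_sub_sigma_img, rsatS_iff_behavS_sub, HsatS.
  - intros Hrtp P. apply Hrtp, rsatS_iff_behavS_sub.
    apply tau_img_sub_iff_sub_sigma_img. intros t Ht. exact Ht.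
Qed.

End RobustTraceCriteria.

Theorem theorem5p1 (CC : compilation_chain)
  (rel : TraceS CC -> TraceT CC -> Prop) :
  (RTP_tau CC rel <-> RTC CC rel) /\ (RTC CC rel <-> RTP_sigma CC rel).
Proof. split; [apply RTP_tau_iff_RTC | apply RTC_iff_RTP_sigma]. Qed.
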